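(* Let $A, C, D$ be binary random variables, with $A$ taking values $a,\overline{a}$, $C$ taking values $c,\overline{c}$, $D$ taking values $d,\overline{d}$, and let $Y$ be a real random variable with finite expectation. Suppose the joint distribution factorizes as \[ p(A,C,D,Y)=p(C)\,p(D\mid C)\,p(A\mid C)\,p(Y\mid A,C), \] and that every event $\{A=x, C=y, D=z\}$ has positive probability. Let $p(c)=0.5$ and $p(a\mid c)=p(\overline{a}\mid\overline{c})=p(d\mid c)=p(\overline{d}\mid\overline{c})\ge 0.5$. If \[ E[Y|a,c]-E[Y|a,\overline{c}]\ \le\ E[Y|\overline{a},\overline{c}]-E[Y|\overline{a},c]\ \le\ 0, \] then $RD_{crude}\le RD_{obs}\le RD_{true}$.
   Context: $RD_{true}=E[Y|a,c]p(c)+E[Y|a,\overline{c}]p(\overline{c})-E[Y|\overline{a},c]p(c)-E[Y|\overline{a},\overline{c}]p(\overline{c})$; $RD_{crude}=E[Y|a]-E[Y|\overline{a}]$; $RD_{obs}=E[Y|a,d]p(d)+E[Y|a,\overline{d}]p(\overline{d})-E[Y|\overline{a},d]p(d)-E[Y|\overline{a},\overline{d}]p(\overline{d})$. *)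

From HB Require Import structures.
From mathcomp Require Import all_boot all_order all_algebra.
From mathcomp Require Import all_classical all_reals all_analysis.

Set Implicit Arguments.
Unset Strict Implicit.
Unset Printing Implicit Defensive.

Import Order.TTheory GRing.Theory Num.Theory.
Local Open Scope classical_set_scope.
Local Open Scope ring_scope.

Section Defs.
Context {d : measure_display} {T : measurableType d} {R : realType}.
Variable P : probability T R.

Definition ev (X : T -> bool) (b : bool) : set T := [set t | X t = b].

Definition pr (S : set T) : R := fine (P S).

Definition cpr (S B : set T) : R := pr (S `&` B) / pr B.

Definition condE (Y : T -> R) (B : set T) : R :=
  fine (\int[P]_(x in B) (Y x)%:E) / pr B.
End Defs.

From HB Require Import structures.
From mathcomp Require Import all_boot all_order all_algebra.
From mathcomp Require Import all_classical all_reals all_analysis.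
From mathcomp Require Import measurable_realfun ring lra.
Import Order.TTheory GRing.Theory Num.Theory.
Local Open Scope classical_set_scope.
Local Open Scope ring_scope.

(* Under the factorization, Y is independent of D given (A, C), so E[Y | A = x, D = z]
   is a mixture of the stratum means m_xy = E[Y | A = x, C = y] weighted by p(y | x, z),
   and E[Y | A = x] is the mixture weighted by p(y | x).  With p(c) = 1/2 and the common
   accuracy q, each of the three risk differences takes the form
     w (m_ac - m_abar,cbar) + (1 - w) (m_a,cbar - m_abar,c),
   with w = q for RD_crude, w = (s + 1/2)/2 for RD_obs where s = q^2 / (q^2 + (1-q)^2),
   and w = 1/2 for RD_true.  The first hypothesis on Y says exactly that the first
   difference is at most the second, so the expression decreases in w, and
   1/2 <= (s + 1/2)/2 <= q because 2q - 1/2 - s = (2q - 1)^3 / (2 (q^2 + (1-q)^2)). *)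

Section integral_mscale.
Context {d} {T : measurableType d} {R : realType} (m : {measure set T -> \bar R}).
Local Open Scope ereal_scope.

Lemma integral_mscale (D : set T) (k : {nonneg R}) (f : T -> \bar R) :
  measurable D -> m.-integrable D f ->
  \int[mscale k m]_(x in D) f x = k%:num%:E * \int[m]_(x in D) f x.
Proof.
move=> mD mf; have mf' := measurable_int m mf.
rewrite [LHS]integralE [X in _ = _ * X]integralE.
rewrite (ge0_integral_mscale _ mD _ (measurable_funepos mf')) //.
rewrite (ge0_integral_mscale _ mD _ (measurable_funeneg mf')) //.
by rewrite [RHS]muleBr // fin_num_adde_defr // integrable_pos_fin_num.
Qed.

End integral_mscale.

Section proportional_laws.
Context {d} {T : measurableType d} {R : realType} {mu : {measure set T -> \bar R}}.
Context {Y : T -> R}.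
Hypotheses (mY : measurable_fun setT Y) (iY : mu.-integrable setT (EFin \o Y)).
Local Open Scope ereal_scope.

Let nonzero : set R := ~` [set 0%R].
Let Y_on S := (Y \* \1_S)%R.

Let measurable_nonzero : measurable nonzero.
Proof. exact/measurableC. Qed.

Let measurable_Y_on S : measurable S -> measurable_fun setT (Y_on S).
Proof. by move=> mS; apply: measurable_funM => //; exact: measurable_indic. Qed.

Let preimage_Y_on S B : B `<=` nonzero -> Y_on S @^-1` B = S `&` Y @^-1` B.
Proof.
move=> Bnz; apply/seteqP; split => x; rewrite /Y_on /= indicE.
  case: (boolP (x \in S)) => [/set_mem Sx|_]; rewrite ?mulr1 ?mulr0 // => /Bnz.
  by rewrite /nonzero /=.
by move=> [/mem_set -> ?]; rewrite mulr1.
Qed.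

Let integral_Y_on S : measurable S ->
  \int[mu]_(x in S) (Y x)%:E = \int[mu]_(x in Y_on S @^-1` nonzero) (EFin \o Y_on S) x.
Proof.
move=> mS; rewrite integral_mkcond [RHS]integral_mkcond; apply: eq_integral => x _.
rewrite /patch /Y_on /= !indicE; case: (boolP (x \in S)) => xS /=; rewrite ?mulr1 ?mulr0.
  have [->|Y0] := eqVneq (Y x) 0%R; first by case: ifP.
  by rewrite mem_set //= indicE xS mulr1; exact/eqP.
by case: ifPn.
Qed.

Let integrable_Y_on S : measurable S ->
  mu.-integrable (Y_on S @^-1` nonzero) (EFin \o Y_on S).
Proof.
move=> mS; apply: (@integrableS _ _ _ _ setT) => //.
  by rewrite -[X in measurable X]setTI; exact: measurable_Y_on.
have : mu.-integrable S (EFin \o Y) by apply: integrableS iY.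
rewrite integrable_mkcond //; apply: eq_integrable => // x _.
by rewrite /patch /Y_on /= indicE; case: (boolP (x \in S)); rewrite ?mulr1 ?mulr0.
Qed.

(* Y * 1_S pushes mu forward to a measure that agrees with B |-> mu (S `&` Y @^-1` B) away
   from 0, and the integral of the identity against it away from 0 is the integral of Y
   over S. *)
Lemma integral_proportional_laws (k : {nonneg R}) {S S' : set T} :
  measurable S -> measurable S' ->
  (forall B, measurable B -> mu (S `&` Y @^-1` B) = k%:num%:E * mu (S' `&` Y @^-1` B)) ->
  \int[mu]_(x in S) (Y x)%:E = k%:num%:E * \int[mu]_(x in S') (Y x)%:E.
Proof.
move=> mS mS' lawSS'; have mEFin := @EFin_measurable R setT.
have iS := integrable_Y_on _ mS; have iS' := integrable_Y_on _ mS'.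
rewrite !integral_Y_on // -(integral_pushforward (measurable_Y_on _ mS) mEFin iS) //.
rewrite -(integral_pushforward (measurable_Y_on _ mS') mEFin iS') //.
have := integrable_pushforward (measurable_Y_on _ mS') mEFin iS' measurable_nonzero.
move=> /(integral_mscale _ _ k _ measurable_nonzero) <-; first exact: measurable_Y_on.
move=> mYS'; apply: eq_measure_integral; first exact: measurable_Y_on.
move=> mYS B mB Bnz.
change (mu (Y_on S @^-1` B) = k%:num%:E * mu (Y_on S' @^-1` B)).
by rewrite !preimage_Y_on // lawSS'.
Qed.

End proportional_laws.

Section binary_partition.
Context {d} {T : measurableType d} {R : realType} (P : probability T R).

Lemma measurable_ev {X : T -> bool} b : measurable_fun setT X -> measurable (ev X b).
Proof. by move=> mX; rewrite -[ev X b]setTI; exact: mX measurableT [set b] I. Qed.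

Lemma setI_evU (X : T -> bool) (S : set T) :
  S = (S `&` ev X true) `|` (S `&` ev X false).
Proof. by rewrite -setIUr /ev; apply/esym/setIidPl => x _ /=; case: (X x); [left|right]. Qed.

Lemma setI_ev_disj (X : T -> bool) (S : set T) :
  [disjoint S `&` ev X true & S `&` ev X false].
Proof. by apply/disj_setPS => x [[_ Xt] [_]]; rewrite /ev /= Xt. Qed.

Lemma prE (S : set T) : measurable S -> P S = (pr P S)%:E.
Proof. by move=> mS; rewrite /pr fineK // fin_num_measure. Qed.

Lemma pr_ge0 (S : set T) : 0 <= pr P S.
Proof. by rewrite /pr fine_ge0. Qed.

Lemma pr_setT : pr P setT = 1.
Proof. by rewrite /pr probability_setT. Qed.

Lemma pr_ev_split {S : set T} {X : T -> bool} : measurable S -> measurable_fun setT X ->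
  pr P S = pr P (S `&` ev X true) + pr P (S `&` ev X false).
Proof.
move=> mS mX; have mSX b : measurable (S `&` ev X b) by exact/measurableI/measurable_ev.
apply: EFin_inj; rewrite EFinD -!prE // {1}(setI_evU X S) measureU //.
exact/disj_set2P/setI_ev_disj.
Qed.

Lemma cprK (S B : set T) : pr P B != 0 -> cpr P S B * pr P B = pr P (S `&` B).
Proof. by move=> B0; rewrite /cpr divfK. Qed.

Lemma cpr_ev_false {X : T -> bool} {B : set T} :
  measurable B -> measurable_fun setT X -> 0 < pr P B ->
  cpr P (ev X false) B = 1 - cpr P (ev X true) B.
Proof.
move=> mB mX B0; apply/eqP; rewrite eq_sym subr_eq /cpr -mulrDl addrC.
by rewrite !(setIC (ev X _)) -pr_ev_split // divff // lt0r_neq0.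
Qed.

Context {Y : T -> R} (iY : P.-integrable setT (EFin \o Y)).

Lemma fin_num_integral (S : set T) :
  measurable S -> (\int[P]_(x in S) (Y x)%:E)%E \is a fin_num.
Proof.
by move=> mS; apply: integrable_fin_num => //; exact: integrableS measurableT mS (subsetT S) iY.
Qed.

Lemma condE_ev_split {S : set T} {X : T -> bool} :
  measurable S -> measurable_fun setT X ->
  0 < pr P (S `&` ev X true) -> 0 < pr P (S `&` ev X false) ->
  condE P Y S = (condE P Y (S `&` ev X true) * pr P (S `&` ev X true)
                 + condE P Y (S `&` ev X false) * pr P (S `&` ev X false))
                / (pr P (S `&` ev X true) + pr P (S `&` ev X false)).
Proof.
move=> mS mX St Sf; have mSX b : measurable (S `&` ev X b) by exact/measurableI/measurable_ev.
rewrite /condE -pr_ev_split // !divfK ?lt0r_neq0 //; congr (_ / _).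
rewrite {1}(setI_evU X S) integral_setU //; last exact: setI_ev_disj.
  by rewrite fineD // fin_num_integral.
by rewrite -setI_evU; exact: measurable_funTS (measurable_int _ iY).
Qed.

End binary_partition.

Definition mix {R : pzRingType} (w a b : R) := w * a + (1 - w) * b.

Lemma mixC {R : pzRingType} (w a b : R) : mix w a b = mix (1 - w) b a.
Proof. by rewrite /mix opprB addrC subrKC. Qed.

Lemma mix_weights {R : fieldType} (u v a b : R) :
  u + v != 0 -> (a * u + b * v) / (u + v) = mix (u / (u + v)) a b.
Proof. by move=> uv0; rewrite /mix; field. Qed.

(* p(c | a, d) when p(c) = 1/2 and both A and D agree with C with probability q. *)
Definition concordant_posterior {R : fieldType} (q : R) :=
  q ^+ 2 / (q ^+ 2 + (1 - q) ^+ 2).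

Lemma mix_antitone {R : realDomainType} (w1 w2 u v : R) :
  u <= v -> w1 <= w2 -> mix w2 u v <= mix w1 u v.
Proof. by move=> uv w12; rewrite /mix; nra. Qed.

Lemma concordant_posterior_bounds {R : realFieldType} (q : R) :
  1 / 2 <= q -> 1 / 2 <= concordant_posterior q <= 2 * q - 1 / 2.
Proof.
move=> q_ge; have den_gt0 : 0 < q ^+ 2 + (1 - q) ^+ 2 by rewrite ltr_pwDl ?sqr_ge0 ?exprn_gt0 //; lra.
rewrite /concordant_posterior ler_pdivlMr // ler_pdivrMr //.
have cube_ge0 : 0 <= (2 * q - 1) ^+ 3 by rewrite exprn_ge0 //; lra.
by apply/andP; split; move: cube_ge0; rewrite !exprS expr0; nra.
Qed.

Lemma risk_differences_ordered {R : realFieldType} (q s m1 m2 m3 m4 : R) :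
  1 / 2 <= s <= 2 * q - 1 / 2 -> m1 - m2 <= m4 - m3 ->
  mix q m1 m2 - mix q m4 m3
  <= mix s m1 m2 * (1 / 2) + mix (1 / 2) m1 m2 * (1 / 2)
     - mix (1 / 2) m4 m3 * (1 / 2) - mix s m4 m3 * (1 / 2)
  <= m1 * (1 / 2) + m2 * (1 / 2) - m3 * (1 / 2) - m4 * (1 / 2).
Proof.
move=> /andP[s_ge s_le] m_le; set u := m1 - m4; set v := m2 - m3.
have u_le_v : u <= v by rewrite /u /v; lra.
have -> : mix q m1 m2 - mix q m4 m3 = mix q u v by rewrite /mix /u /v; ring.
have -> : mix s m1 m2 * (1 / 2) + mix (1 / 2) m1 m2 * (1 / 2)
          - mix (1 / 2) m4 m3 * (1 / 2) - mix s m4 m3 * (1 / 2)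
          = mix ((s + 1 / 2) / 2) u v by rewrite /mix /u /v; field.
have -> : m1 * (1 / 2) + m2 * (1 / 2) - m3 * (1 / 2) - m4 * (1 / 2)
          = mix (1 / 2) u v by rewrite /mix /u /v; field.
by rewrite !mix_antitone //; lra.
Qed.

Section causal_model.
Context {d} {T : measurableType d} {R : realType} {P : probability T R}.
Context {A C D : T -> bool} {Y : T -> R}.
Hypotheses (mA : measurable_fun setT A) (mC : measurable_fun setT C)
  (mD : measurable_fun setT D) (mY : measurable_fun setT Y)
  (iY : P.-integrable setT (fun t => (Y t)%:E)).
Hypothesis factorization : forall (x y z : bool) (B : set R), measurable B ->
  pr P (ev A x `&` ev C y `&` ev D z `&` Y @^-1` B)
  = pr P (ev C y) * cpr P (ev D z) (ev C y) * cpr P (ev A x) (ev C y)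
    * cpr P (Y @^-1` B) (ev A x `&` ev C y).
Hypothesis cell_gt0 : forall x y z : bool, 0 < pr P (ev A x `&` ev C y `&` ev D z).

Local Notation cell x y z := (ev A x `&` ev C y `&` ev D z).
Local Notation m x y := (condE P Y (ev A x `&` ev C y)).

Let measurable_AC x y : measurable (ev A x `&` ev C y).
Proof. by apply: measurableI; exact: measurable_ev. Qed.

Let measurable_cell x y z : measurable (cell x y z).
Proof. by apply: measurableI => //; exact: measurable_ev. Qed.

Lemma pr_AC_gt0 x y : 0 < pr P (ev A x `&` ev C y).
Proof. by rewrite (pr_ev_split P (measurable_AC x y) mD) ?addr_gt0. Qed.

Lemma pr_C_gt0 y : 0 < pr P (ev C y).
Proof.
rewrite (pr_ev_split P (measurable_ev y mC) mA).
by rewrite !(setIC (ev C y)) addr_gt0 ?pr_AC_gt0.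
Qed.

Lemma pr_cell x y z :
  pr P (cell x y z) = cpr P (ev D z) (ev C y) * pr P (ev A x `&` ev C y).
Proof.
have := factorization x y z setT measurableT; rewrite preimage_setT setIT => ->.
have -> : cpr P setT (ev A x `&` ev C y) = 1.
  by rewrite /cpr setTI divff // lt0r_neq0 // pr_AC_gt0.
by rewrite mulr1 -(cprK P (ev A x)) ?lt0r_neq0 ?pr_C_gt0 //; ring.
Qed.

Lemma condE_cell x y z : condE P Y (cell x y z) = m x y.
Proof.
have k_ge0 : 0 <= cpr P (ev D z) (ev C y) by rewrite divr_ge0 ?pr_ge0.
have mYpre (B : set R) : measurable B -> measurable (Y @^-1` B).
  by move=> mB; rewrite -[_ @^-1` _]setTI; exact: mY.
have law (B : set R) : measurable B -> P (cell x y z `&` Y @^-1` B)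
    = ((cpr P (ev D z) (ev C y))%:E * P (ev A x `&` ev C y `&` Y @^-1` B))%E.
  move=> mB; have mYB := mYpre B mB.
  rewrite !prE; [|exact: measurableI|exact: measurableI].
  rewrite -EFinM factorization //; congr EFin.
  rewrite (setIC _ (Y @^-1` B)) -(cprK P (Y @^-1` B)) ?lt0r_neq0 ?pr_AC_gt0 //.
  by rewrite -(cprK P (ev A x)) ?lt0r_neq0 ?pr_C_gt0 //; ring.
have k_neq0 : cpr P (ev D z) (ev C y) != 0.
  by move: (cell_gt0 x y z); rewrite pr_cell; apply: contraTneq => ->; rewrite mul0r ltxx.
rewrite /condE (integral_proportional_laws mY iY (NngNum k_ge0) (measurable_cell x y z)
  (measurable_AC x y) law) /= fineM ?fin_num_integral // pr_cell.
by rewrite -mulf_div divff // mul1r.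
Qed.

Lemma condE_A_split x :
  condE P Y (ev A x) =
  (m x true * pr P (ev A x `&` ev C true) + m x false * pr P (ev A x `&` ev C false))
  / (pr P (ev A x `&` ev C true) + pr P (ev A x `&` ev C false)).
Proof. by rewrite (condE_ev_split P iY (measurable_ev x mA) mC) ?pr_AC_gt0. Qed.

Lemma condE_AD_split x z :
  condE P Y (ev A x `&` ev D z) =
  (m x true * pr P (cell x true z) + m x false * pr P (cell x false z))
  / (pr P (cell x true z) + pr P (cell x false z)).
Proof.
have mAD : measurable (ev A x `&` ev D z) by apply: measurableI; exact: measurable_ev.
rewrite (condE_ev_split P iY mAD mC) !(setIAC (ev A x) (ev D z)) ?cell_gt0 //.
by rewrite !condE_cell.
Qed.

Section symmetric_design.
Hypotheses (pc : pr P (ev C true) = 1 / 2)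
  (e1 : cpr P (ev A true) (ev C true) = cpr P (ev A false) (ev C false))
  (e2 : cpr P (ev A false) (ev C false) = cpr P (ev D true) (ev C true))
  (e3 : cpr P (ev D true) (ev C true) = cpr P (ev D false) (ev C false)).

Let q := cpr P (ev A true) (ev C true).
Let acc b := if b then q else 1 - q.

Lemma pr_C_half y : pr P (ev C y) = 1 / 2.
Proof.
have := pr_ev_split P measurableT mC; rewrite !setTI pr_setT.
by case: y; rewrite ?pc; lra.
Qed.

Lemma cpr_A_design x y : cpr P (ev A x) (ev C y) = acc (x == y).
Proof.
have := cpr_ev_false P (measurable_ev y mC) mA (pr_C_gt0 y).
by move: e1; case: x; case: y; rewrite /acc /q /=; lra.
Qed.

Lemma cpr_D_design z y : cpr P (ev D z) (ev C y) = acc (z == y).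
Proof.
have := cpr_ev_false P (measurable_ev y mC) mD (pr_C_gt0 y).
by move: e1 e2 e3; case: z; case: y; rewrite /acc /q /=; lra.
Qed.

Lemma pr_AC_design x y : pr P (ev A x `&` ev C y) = acc (x == y) / 2.
Proof.
by rewrite -(cprK P) ?lt0r_neq0 ?pr_C_gt0 // cpr_A_design pr_C_half div1r.
Qed.

Lemma accuracy_gt0 : 0 < q.
Proof. by have := pr_AC_gt0 true true; rewrite pr_AC_design /acc /=; lra. Qed.

Lemma accuracy_lt1 : q < 1.
Proof. by have := pr_AC_gt0 false true; rewrite pr_AC_design /acc /=; lra. Qed.

Lemma pr_D_half z : pr P (ev D z) = 1 / 2.
Proof.
rewrite (pr_ev_split P (measurable_ev z mD) mC) -!(cprK P (ev D z)) ?lt0r_neq0 ?pr_C_gt0 //.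
by rewrite !cpr_D_design !pr_C_half; case: z; rewrite /acc /=; lra.
Qed.

Lemma condE_A_design x : condE P Y (ev A x) = mix q (m x x) (m x (~~ x)).
Proof.
rewrite condE_A_split mix_weights ?lt0r_neq0 ?addr_gt0 ?pr_AC_gt0 // !pr_AC_design.
case: x; rewrite /acc /= ?(mixC _ (m false true)); congr (mix _ _ _); field.
all: by rewrite ?(addrC q) subrK oner_neq0.
Qed.

Lemma condE_AD_design x z :
  condE P Y (ev A x `&` ev D z)
  = mix (if x == z then concordant_posterior q else 1 / 2) (m x x) (m x (~~ x)).
Proof.
rewrite condE_AD_split mix_weights ?lt0r_neq0 ?addr_gt0 ?cell_gt0 //.
rewrite !pr_cell !cpr_D_design !pr_AC_design /concordant_posterior.
have q_gt0 := accuracy_gt0; have q_lt1 := accuracy_lt1.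
case: x; case: z; rewrite /acc /= ?(mixC _ (m false true)); congr (mix _ _ _); field.
all: by apply: lt0r_neq0; nra.
Qed.

End symmetric_design.

End causal_model.

(* Value a (resp. c, d) is encoded as true, abar (resp. cbar, dbar) as false. *)
Theorem theorem3 (dT : measure_display) (T : measurableType dT) (R : realType)
  (P : probability T R) (A C D : T -> bool) (Y : T -> R)
  (mA : measurable_fun setT A) (mC : measurable_fun setT C)
  (mD : measurable_fun setT D) (mY : measurable_fun setT Y)
  (iY : P.-integrable setT (fun t => (Y t)%:E))
  (* factorization p(A,C,D,Y) = p(C) p(D|C) p(A|C) p(Y|A,C) *)
  (fact : forall (x y z : bool) (B : set R), measurable B ->
     pr P (ev A x `&` ev C y `&` ev D z `&` Y @^-1` B)
     = pr P (ev C y) * cpr P (ev D z) (ev C y) * cpr P (ev A x) (ev C y)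
       * cpr P (Y @^-1` B) (ev A x `&` ev C y))
  (* positivity *)
  (pos : forall x y z : bool, 0 < pr P (ev A x `&` ev C y `&` ev D z))
  (pc : pr P (ev C true) = 1 / 2)
  (e1 : cpr P (ev A true) (ev C true) = cpr P (ev A false) (ev C false))
  (e2 : cpr P (ev A false) (ev C false) = cpr P (ev D true) (ev C true))
  (e3 : cpr P (ev D true) (ev C true) = cpr P (ev D false) (ev C false))
  (half : 1 / 2 <= cpr P (ev A true) (ev C true))
  (hY1 : condE P Y (ev A true `&` ev C true) - condE P Y (ev A true `&` ev C false)
         <= condE P Y (ev A false `&` ev C false) - condE P Y (ev A false `&` ev C true))
  (hY2 : condE P Y (ev A false `&` ev C false) - condE P Y (ev A false `&` ev C true)
         <= 0) :
  let E := condE P Y in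
  let RD_true :=
    E (ev A true `&` ev C true) * pr P (ev C true)
    + E (ev A true `&` ev C false) * pr P (ev C false)
    - E (ev A false `&` ev C true) * pr P (ev C true)
    - E (ev A false `&` ev C false) * pr P (ev C false) in
  let RD_crude := E (ev A true) - E (ev A false) in
  let RD_obs :=
    E (ev A true `&` ev D true) * pr P (ev D true)
    + E (ev A true `&` ev D false) * pr P (ev D false)
    - E (ev A false `&` ev D true) * pr P (ev D true)
    - E (ev A false `&` ev D false) * pr P (ev D false) in
  RD_crude <= RD_obs <= RD_true.
Proof.
cbv zeta.
have pr_C := pr_C_half mC pc.
have pr_D := pr_D_half mA mC mD pos pc e1 e2 e3.
have E_A := condE_A_design mA mC mD iY pos pc e1.
have E_AD := condE_AD_design mA mC mD mY iY fact pos pc e1 e2 e3.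
rewrite !E_A !E_AD !pr_C !pr_D /=.
by apply: risk_differences_ordered hY1; exact: concordant_posterior_bounds.
Qed.
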